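(* Let $n\ge1$. Let $\mathbf{R}$ be a subalgebra of $\mathbf{P\L}_n\times\mathbf{P\L}_n$ with $\mathbf{R}\subseteq{\le}$. Assume $\mathbf{R}$ is not the diagonal of a subalgebra of $\mathbf{P\L}_n$. Let $\mathbf{S}=\mathrm{pr}_1(\mathbf{R})\times\mathrm{pr}_2(\mathbf{R})=\mathbf{P\L}_k\times\mathbf{P\L}_{k'}$, where $k,k'$ are divisors of $n$. Then there exists $\overline{\mathbf{R}}\in\mathcal{S}_n$ with $\mathbf{R}=\overline{\mathbf{R}}\cap\mathbf{S}$.
   Context: For $n\ge 1$, the algebra $\mathbf{P\L}_n=\langle\{0,\tfrac1n,\dots,\tfrac{n-1}{n},1\},\wedge,\vee,\odot,\oplus,0,1\rangle$ has $\wedge=\min$, $\vee=\max$, $x\odot y=\max\{0,x+y-1\}$ and $x\oplus y=\min\{1,x+y\}$. For a divisor $k$ of $n$, $\mathbf{P\L}_k$ is the subalgebra with universe $\{\tfrac ik:0\le i\le k\}$. The relations are ${\le}=\{(x,y): x\le y\}$ and $\lhd=\{(x,y):x=0\text{ or }y=1\}$. The set $\mathcal{S}_n$ is the collection of all subalgebras $\mathbf{R}$ of $\mathbf{P\L}_n\times\mathbf{P\L}_n$ with $\lhd\subseteq\mathbf{R}\subseteq{\le}$. *)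

(* The element i/n of PL_n is represented by its numerator
   i : 'I_n.+1 (so 0 is ord0 and 1 is ord_max, i.e. numerator n). *)
From mathcomp Require Import all_boot.
Set Implicit Arguments. Unset Strict Implicit. Unset Printing Implicit Defensive.

Section PL.
Variable n : nat.
Definition PL := 'I_n.+1.

Definition pl0 : PL := ord0.
Definition pl1 : PL := ord_max.
Definition pl_meet (x y : PL) : PL := inord (minn x y).
Definition pl_join (x y : PL) : PL := inord (maxn x y).
(* x (.) y = max(0, x+y-1): numerators (x+y) - n (truncated) *)
Definition pl_odot (x y : PL) : PL := inord ((x + y) - n).
(* x (+) y = min(1, x+y): numerators min(n, x+y) *)
Definition pl_oplus (x y : PL) : PL := inord (minn n (x + y)).

Definition subalg (A : {set PL}) : Prop :=
  [/\ pl0 \in A, pl1 \in A &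
      forall x y, x \in A -> y \in A ->
        [/\ pl_meet x y \in A, pl_join x y \in A,
            pl_odot x y \in A & pl_oplus x y \in A]].

Definition pair_op (f : PL -> PL -> PL) (p q : PL * PL) : PL * PL :=
  (f p.1 q.1, f p.2 q.2).

Definition subalg2 (R : {set PL * PL}) : Prop :=
  [/\ (pl0, pl0) \in R, (pl1, pl1) \in R &
      forall p q, p \in R -> q \in R ->
        [/\ pair_op pl_meet p q \in R, pair_op pl_join p q \in R,
            pair_op pl_odot p q \in R & pair_op pl_oplus p q \in R]].

Definition pl_le : {set PL * PL} := [set p : PL * PL | (p.1 : nat) <= p.2].
Definition pl_lhd : {set PL * PL} := [set p : PL * PL | (p.1 == pl0) || (p.2 == pl1)].

Definition Scal (R : {set PL * PL}) : Prop :=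
  subalg2 R /\ pl_lhd \subset R /\ R \subset pl_le.

Definition diag (A : {set PL}) : {set PL * PL} := [set (a, a) | a in A].

Definition pr1 (R : {set PL * PL}) : {set PL} := [set p.1 | p in R].
Definition pr2 (R : {set PL * PL}) : {set PL} := [set p.2 | p in R].
End PL.

(* A relation R <= (<=) that is not a diagonal contains a pair a < b; doubling
   it with (+) or (.) strictly widens the gap b - a, so (0, 1) lies in R.  Take
   for Rbar the set of pairs (x, y) lying "outside" some pair (a, b) of R, i.e.
   x <= a and b <= y.  All operations are monotone, so Rbar is a subalgebra of
   (<=) containing <|.  Conversely, if (x, y) lies outside (a, b) in R and
   x, y are coordinates of pairs r, s of R, then
   ((r (+) (0, 1)) /\ (a, b)) \/ (s (.) (0, 1)) = (x, y) lies in R. *)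
From mathcomp Require Import all_boot.
From mathcomp Require Import zify.

Set Implicit Arguments.
Unset Strict Implicit.
Unset Printing Implicit Defensive.

Section PLn.
Variable n : nat.
Implicit Types (x y : PL n) (p q r s : PL n * PL n) (R : {set PL n * PL n}).

Lemma pl_meetE x y : pl_meet x y = minn x y :> nat.
Proof. rewrite inordK // ltnS; have := ltn_ord x; lia. Qed.

Lemma pl_joinE x y : pl_join x y = maxn x y :> nat.
Proof. rewrite inordK // ltnS; have := ltn_ord x; have := ltn_ord y; lia. Qed.

Lemma pl_odotE x y : pl_odot x y = x + y - n :> nat.
Proof. rewrite inordK // ltnS; have := ltn_ord x; have := ltn_ord y; lia. Qed.

Lemma pl_oplusE x y : pl_oplus x y = minn n (x + y) :> nat.
Proof. rewrite inordK // ltnS; lia. Qed.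

Lemma pl_pair_inj p q : p.1 = q.1 :> nat -> p.2 = q.2 :> nat -> p = q.
Proof. by case: p q => [a b] [c d] /= /val_inj-> /val_inj->. Qed.

Definition monotone2 (f : PL n -> PL n -> PL n) :=
  forall x y x' y', x <= x' -> y <= y' -> f x y <= f x' y'.

Lemma pl_meet_mono : monotone2 (@pl_meet n).
Proof. by move=> x y x' y'; rewrite !pl_meetE; lia. Qed.

Lemma pl_join_mono : monotone2 (@pl_join n).
Proof. by move=> x y x' y'; rewrite !pl_joinE; lia. Qed.

Lemma pl_odot_mono : monotone2 (@pl_odot n).
Proof. by move=> x y x' y'; rewrite !pl_odotE; lia. Qed.

Lemma pl_oplus_mono : monotone2 (@pl_oplus n).
Proof. by move=> x y x' y'; rewrite !pl_oplusE; lia. Qed.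

Lemma mem_pr1 R p : p \in R -> p.1 \in pr1 R.
Proof. by move=> Rp; apply/imsetP; exists p. Qed.

Lemma mem_pr2 R p : p \in R -> p.2 \in pr2 R.
Proof. by move=> Rp; apply/imsetP; exists p. Qed.

Lemma subalg2_pr1 R : subalg2 R -> subalg (pr1 R).
Proof.
case=> R00 R11 closed; split; [exact: (mem_pr1 R00) | exact: (mem_pr1 R11) |].
move=> _ _ /imsetP[p Rp ->] /imsetP[q Rq ->].
have [Rmeet Rjoin Rodot Roplus] := closed p q Rp Rq.
by split; [exact: (mem_pr1 Rmeet) | exact: (mem_pr1 Rjoin)
          | exact: (mem_pr1 Rodot) | exact: (mem_pr1 Roplus)].
Qed.

Lemma diag_pr1 R : {in R, forall p, p.1 = p.2} -> R = diag (pr1 R).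
Proof.
move=> diagR; apply/setP=> -[a b].
apply/idP/imsetP => [Rab | [_ /imsetP[p Rp ->] ->]].
  by exists a; [exact: (mem_pr1 Rab) | have /= -> := diagR _ Rab].
by rewrite {2}(diagR _ Rp) -surjective_pairing.
Qed.

(* In the boundary case a + b = n (numerators), doubling with (+) keeps the
   gap and lands on (2a, n), after which (.) widens it. *)
Lemma subalg2_gap_grows R p : subalg2 R -> p \in R -> p.1 < p.2 ->
  p != (pl0 n, pl1 n) -> exists2 q : PL n * PL n, q \in R & p.2 - p.1 < q.2 - q.1.
Proof.
case=> _ _ closed Rp lt_p p_ne.
have [_ _ Rodot Roplus] := closed p p Rp Rp.
have := ltn_ord p.2; rewrite ltnS => le_n.
have [lt_n | gt_n | eq_n] := ltngtP (p.1 + p.2) n.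
- by exists (pair_op (@pl_oplus n) p p); rewrite //= !pl_oplusE; lia.
- by exists (pair_op (@pl_odot n) p p); rewrite //= !pl_odotE; lia.
- have p1_gt0 : 0 < p.1.
    rewrite lt0n; apply: contraNneq p_ne => p1_0.
    by apply/eqP/pl_pair_inj => /=; lia.
  have [_ _ Rodot2 _] := closed _ _ Roplus Roplus.
  set p2 := pair_op (@pl_oplus n) p p.
  by exists (pair_op (@pl_odot n) p2 p2); rewrite //= !pl_odotE /= !pl_oplusE; lia.
Qed.

Lemma subalg2_pl0_pl1 R p : subalg2 R -> p \in R -> p.1 < p.2 ->
  (pl0 n, pl1 n) \in R.
Proof.
move=> sR; have [m] := ubnP (n - (p.2 - p.1)).
elim: m p => // m IH p gap_lt Rp lt_p.
have [<- // | p_ne] := eqVneq p (pl0 n, pl1 n).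
have [q Rq gap_pq] := subalg2_gap_grows sR Rp lt_p p_ne.
by apply: (IH q _ Rq); have := ltn_ord q.2; lia.
Qed.

Definition widen R : {set PL n * PL n} :=
  [set q : PL n * PL n | [exists p in R, (q.1 <= p.1) && (p.2 <= q.2)]].

Lemma widenP R q :
  reflect (exists2 p : PL n * PL n, p \in R & q.1 <= p.1 /\ p.2 <= q.2)
          (q \in widen R).
Proof.
rewrite inE; apply: (iffP existsP) => [[p /and3P[Rp le1 le2]] | [p Rp [le1 le2]]].
  by exists p.
by exists p; rewrite Rp le1.
Qed.

Lemma sub_widen R : R \subset widen R.
Proof. by apply/subsetP=> p Rp; apply/widenP; exists p. Qed.

Lemma widen_op R f : monotone2 f ->
    (forall p q, p \in R -> q \in R -> pair_op f p q \in R) ->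
  forall p q, p \in widen R -> q \in widen R -> pair_op f p q \in widen R.
Proof.
move=> mono_f closed p q /widenP[p' Rp' [le1 le2]] /widenP[q' Rq' [le3 le4]].
by apply/widenP; exists (pair_op f p' q'); [exact: closed | split; apply: mono_f].
Qed.

Lemma subalg2_widen R : subalg2 R -> subalg2 (widen R).
Proof.
case=> R00 R11 closed; split; try exact: (subsetP (sub_widen R)).
by move=> p q wp wq; split;
  [apply: (widen_op pl_meet_mono) | apply: (widen_op pl_join_mono)
  | apply: (widen_op pl_odot_mono) | apply: (widen_op pl_oplus_mono)] => //
  p' q' Rp' Rq'; have [] := closed p' q' Rp' Rq'.
Qed.

Lemma lhd_sub_widen R : subalg2 R -> pl_lhd n \subset widen R.
Proof.
case=> R00 R11 _; apply/subsetP=> q; rewrite inE => /orP[] /eqP q_eq; apply/widenP.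
  by exists (pl0 n, pl0 n); rewrite //= q_eq.
by exists (pl1 n, pl1 n); rewrite //= q_eq -ltnS.
Qed.

Lemma widen_sub_le R : R \subset pl_le n -> widen R \subset pl_le n.
Proof.
move=> /subsetP le_R; apply/subsetP=> q /widenP[p /le_R]; rewrite !inE; lia.
Qed.

Lemma pl_interpolate r s q : r.1 <= q.1 -> q.2 <= s.2 ->
  pair_op (@pl_join n)
    (pair_op (@pl_meet n) (pair_op (@pl_oplus n) r (pl0 n, pl1 n)) q)
    (pair_op (@pl_odot n) s (pl0 n, pl1 n)) = (r.1, s.2).
Proof.
move=> le1 le2; apply: pl_pair_inj;
  rewrite /= pl_joinE pl_meetE pl_oplusE pl_odotE /=;
  have := ltn_ord r.1; have := ltn_ord s.1; have := ltn_ord s.2; lia.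
Qed.

Lemma widen_cap_pr R : subalg2 R -> (pl0 n, pl1 n) \in R ->
  widen R :&: setX (pr1 R) (pr2 R) = R.
Proof.
move=> sR R01; have [_ _ closed] := sR.
apply/setP=> -[a b]; apply/idP/idP => [| Rab]; last first.
  by rewrite inE (subsetP (sub_widen R)) //= inE (mem_pr1 Rab) (mem_pr2 Rab).
case/setIP=> /widenP[q Rq [/= le1 le2]].
case/setXP=> /imsetP[r Rr a_r] /imsetP[s Rs b_s].
subst a b; rewrite -(pl_interpolate le1 le2).
have [_ _ _ Rr01] := closed _ _ Rr R01; have [_ _ Rs01 _] := closed _ _ Rs R01.
have [Rmeet _ _ _] := closed _ _ Rr01 Rq.
by have [] := closed _ _ Rmeet Rs01.
Qed.

End PLn.

Theorem lemma3p14 (n : nat) (R : {set PL n * PL n}) :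
  0 < n ->
  subalg2 R ->
  R \subset pl_le n ->
  ~ (exists A : {set PL n}, subalg A /\ R = diag A) ->
  exists Rbar : {set PL n * PL n},
    Scal Rbar /\ R = Rbar :&: setX (pr1 R) (pr2 R).
Proof.
move=> _ sR le_R not_diag.
case: (boolP [exists p : PL n * PL n in R, p.1 < p.2])
  => [/existsP[p /andP[Rp lt_p]] | /existsPn no_gap].
  have R01 := subalg2_pl0_pl1 sR Rp lt_p.
  exists (widen R); split; last by rewrite widen_cap_pr.
  split; first exact: subalg2_widen.
  by split; [exact: lhd_sub_widen | exact: widen_sub_le].
have diagR : {in R, forall p, p.1 = p.2}.
  move=> p Rp; have := subsetP le_R p Rp; rewrite inE => le_p.
  have := no_gap p; rewrite Rp -leqNgt => ge_p.
  by apply/ord_inj/eqP; rewrite eqn_leq le_p.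
by case: not_diag; exists (pr1 R); split; [exact: subalg2_pr1 | exact: diag_pr1].
Qed.
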